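(* Let $(Y,u)$ and $(Y',u')$ be non-empty ultrametric spaces and let $f:Y\to Y'$ be immediate. If $(Y,u)$ is spherically complete, then $f$ is surjective and $(Y',u')$ is spherically complete. Moreover, for every $y\in Y$ and every ball $B'$ in $Y'$ containing $fy$, there is a ball $B$ in $Y$ containing $y$ such that $f(B)=B'$.
   Context: An ultrametric space $(Y,u)$ is a set $Y$ with a map $u$ from $Y\times Y$ onto a totally ordered set $\Gamma$ with last element $\infty$ such that for all $x,y,z\in Y$: $u(y,z)=\infty$ iff $y=z$; $u(y,z)\ge\min\{u(y,x),u(x,z)\}$; $u(y,z)=u(z,y)$. For $y\in Y$ and $\alpha\in\Gamma$, $B_\alpha(y)=\{z\in Y: u(y,z)\ge\alpha\}$ (closed ball), and $B(x,y):=B_{u(x,y)}(x)$. A ball is a union of a non-empty collection of closed balls which contain a common element. A nest of balls is a set of balls totally ordered by inclusion; $(Y,u)$ is spherically complete if every nest of balls has non-empty intersection. We write $fy$ for $f(y)$. An element $z'\in Y'$ is an attractor for $f$ if for every $y\in Y$ with $z'\ne fy$ there is $z\in Y$ with $u'(fz,z')>u'(fy,z')$ and $f(B(y,z))\subseteq B(fy,z')$. The map $f$ is immediate if every $z'\in Y'$ is an attractor for $f$. *)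

From mathcomp Require Import all_boot all_order.
Set Implicit Arguments. Unset Strict Implicit. Unset Printing Implicit Defensive.
Import Order.TTheory.
Local Open Scope order_scope.

Section Ultrametric.
Variables (d : Order.disp_t) (G : orderType d).

Definition ultrametric (Y : Type) (inf : G) (u : Y -> Y -> G) : Prop :=
  [/\ (forall g : G, g <= inf),
      (forall g : G, exists x y, u x y = g),
      (forall y z, u y z = inf <-> y = z),
      (forall x y z, Order.min (u y x) (u x z) <= u y z)
    & (forall y z, u y z = u z y)].

Variable (Y : Type) (u : Y -> Y -> G).

Definition cball (a : G) (y : Y) : Y -> Prop := fun z => a <= u y z.

Definition bxy (x y : Y) : Y -> Prop := cball (u x y) x.

Definition is_closed_ball (B : Y -> Prop) : Prop :=
  exists (y : Y) (a : G), forall z, B z <-> cball a y z.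

Definition is_ball (B : Y -> Prop) : Prop :=
  exists C : (Y -> Prop) -> Prop,
    [/\ (exists D, C D),
        (forall D, C D -> is_closed_ball D),
        (exists x, forall D, C D -> D x)
      & (forall z, B z <-> exists D, C D /\ D z)].

Definition subsetY (A B : Y -> Prop) : Prop := forall z, A z -> B z.

Definition spherically_complete : Prop :=
  forall N : (Y -> Prop) -> Prop,
    (forall B, N B -> is_ball B) ->
    (forall B1 B2, N B1 -> N B2 -> subsetY B1 B2 \/ subsetY B2 B1) ->
    exists y, forall B, N B -> B y.

End Ultrametric.

Section Maps.
Variables (d : Order.disp_t) (G : orderType d) (d' : Order.disp_t) (G' : orderType d').
Variables (Y Y' : Type) (u : Y -> Y -> G) (u' : Y' -> Y' -> G') (f : Y -> Y').

Definition is_attractor (z' : Y') : Prop :=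
  forall y : Y, z' <> f y ->
    exists z : Y, u' (f y) z' < u' (f z) z' /\
      (forall x, bxy u y z x -> bxy u' (f y) z' (f x)).

Definition immediate : Prop := forall z' : Y', is_attractor z'.

End Maps.

(* Fix a preorder [Q] on [Y] and say that [b] dominates [a] when [Q a x] for every [x] in
   [B(a, b)].  Since [B(a, c)] is covered by [B(a, b)] and [B(b, c)], dominance is a preorder,
   and spherical completeness bounds every chain of it; by Zorn's lemma any point is dominated
   by a premaximal one, which therefore admits no strict improvement.  With
   [Q a b := u' (f a) z' <= u' (f b) z'], immediacy provides such improvements as long as
   [f a <> z'], so [z'] has a preimage [y] with [f (B(y0, y))] no further from [z'] than [f y0];
   this gives surjectivity and, balls being convex, [f (B) = B'].  With [Q a b] meaning that
   every ball of a nest [N'] containing [f a] contains [f b], the same argument produces a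
   point whose image lies in all balls of [N']. *)

From mathcomp Require Import all_boot all_order.
From mathcomp Require Import boolp classical_sets.
Import Order.TTheory.
Local Open Scope order_scope.

Section UltrametricBalls.
Context {d : Order.disp_t} {G : orderType d} {inf : G} {Y : Type} {u : Y -> Y -> G}.
Hypothesis Hu : ultrametric inf u.

Lemma um_le_inf g : g <= inf. Proof. by case: Hu. Qed.

Lemma um_sym y z : u y z = u z y. Proof. by case: Hu. Qed.

Lemma um_self y : u y y = inf. Proof. by case: Hu => _ _ -> _ _. Qed.

Lemma um_eq_inf {y z} : inf <= u y z -> y = z.
Proof. by case: Hu => _ _ Hinf _ _ h; apply/Hinf/le_anti; rewrite h um_le_inf. Qed.

Lemma um_triangle x {y z r} : r <= u y x -> r <= u x z -> r <= u y z.
Proof.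
case: Hu => _ _ _ Hmin _ hyx hxz.
by apply: le_trans (Hmin x y z); rewrite le_min hyx hxz.
Qed.

Lemma bxy_l y w : bxy u y w y. Proof. by rewrite /bxy /cball um_self um_le_inf. Qed.

Lemma bxy_r y w : bxy u y w w. Proof. exact: le_refl. Qed.

Lemma bxy_refl_eq {y v} : bxy u y y v -> v = y.
Proof. by rewrite /bxy /cball um_self => /um_eq_inf. Qed.

Lemma bxy_split {a} b {c x} : bxy u a c x -> bxy u a b x \/ bxy u b c x.
Proof.
rewrite /bxy /cball => hx.
case: (leP (u a b) (u a c)) => [hab | hca]; first by left; exact: le_trans hx.
right.
have hbc : u b c <= u a c. (* the isosceles property *)
  rewrite leNgt; apply/negP => hcb.
  case: Hu => _ _ _ Hmin _; have := Hmin b a c.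
  by rewrite ge_min !leNgt hca hcb.
apply: le_trans hbc _; apply: (um_triangle a) => //.
by rewrite (um_sym b); exact: ltW.
Qed.

Lemma cball_recenter {r y c} : cball u r y c -> forall z, cball u r y z <-> cball u r c z.
Proof.
move=> hc z; split => hz; first by apply: (um_triangle y) => //; rewrite um_sym.
exact: (um_triangle c).
Qed.

Lemma cball_bxy {r c a b x} :
  cball u r c a -> cball u r c b -> bxy u a b x -> cball u r c x.
Proof.
move=> ha hb hx; apply: (um_triangle a) => //.
apply: le_trans hx; by apply: (um_triangle c) => //; rewrite um_sym.
Qed.

Lemma ball_mem2_cball {B a b} : is_ball u B -> B a -> B b ->
  exists r c, [/\ cball u r c a, cball u r c b & forall z, cball u r c z -> B z].
Proof.
case=> C [_ Ccl [c Cc] HB] /HB [D1 [CD1 D1a]] /HB [D2 [CD2 D2b]].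
have centred D : C D -> exists r, forall z, D z <-> cball u r c z.
  move=> CD; have [y [r HD]] := Ccl D CD; exists r => z.
  by apply: iff_trans (HD z) _; apply: cball_recenter; exact: (HD c).1 (Cc D CD).
have [r1 D1r] := centred D1 CD1; have [r2 D2r] := centred D2 CD2.
exists (Order.min r1 r2), c; split.
- by apply: le_trans _ ((D1r a).1 D1a); rewrite ge_min lexx.
- by apply: le_trans _ ((D2r b).1 D2b); rewrite ge_min lexx orbT.
- move=> z; rewrite /cball ge_min => /orP [hz | hz]; apply/HB.
  + by exists D1; split => //; exact/D1r.
  + by exists D2; split => //; exact/D2r.
Qed.

Lemma ball_bxy {B a b x} : is_ball u B -> B a -> B b -> bxy u a b x -> B x.
Proof.
move=> hB Ba Bb hx; have [r [c [ha hb sub]]] := ball_mem2_cball hB Ba Bb.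
exact/sub/(cball_bxy ha hb hx).
Qed.

Lemma ball_mem_closer {B a b c} : is_ball u B -> B a -> B c -> u a c <= u b c -> B b.
Proof.
move=> hB Ba Bc hb; apply: (ball_bxy hB Ba Bc).
by apply: (um_triangle c) (lexx _) _; rewrite (um_sym c).
Qed.

Lemma balls_meet_comparable {B1 B2 p} : is_ball u B1 -> is_ball u B2 -> B1 p -> B2 p ->
  subsetY B1 B2 \/ subsetY B2 B1.
Proof.
move=> hB1 hB2 B1p B2p.
have [|/existsNP [a /not_implyP [B1a NB2a]]] := pselect (subsetY B1 B2); first by left.
right => b B2b.
case: (leP (u p a) (u p b)) => hab; first exact: (ball_bxy hB1 B1p B1a).
by exfalso; apply/NB2a/(ball_bxy hB2 B2p B2b); exact: ltW.
Qed.

Lemma ball_inhabited {B} : is_ball u B -> exists x, B x.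
Proof.
by case=> C [[D CD] _ [x Cx] HB]; exists x; apply/HB; exists D; split => //; exact: Cx.
Qed.

Lemma is_ball_bigcup_bxy y (P : Y -> Prop) : (exists w, P w) ->
  is_ball u (fun z => exists2 w, P w & bxy u y w z).
Proof.
move=> [w0 Pw0]; exists (fun D => exists2 w, P w & D = bxy u y w); split.
- by exists (bxy u y w0), w0.
- by move=> _ [w _ ->]; exists y, (u y w).
- by exists y => _ [w _ ->]; exact: bxy_l.
- move=> z; split => [[w Pw hz] | [_ [[w Pw ->] hz]]]; last by exists w.
  by exists (bxy u y w); split => //; exists w.
Qed.

End UltrametricBalls.

Section Dominance.
Context {d : Order.disp_t} {G : orderType d} {inf : G} {Y : Type} {u : Y -> Y -> G}.
Hypotheses (Hu : ultrametric inf u) (Hsc : spherically_complete u).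
Variable Q : Y -> Y -> Prop.
Hypotheses (Q_refl : forall a, Q a a) (Q_trans : forall a b c, Q a b -> Q b c -> Q a c).

Definition dominates a b := forall x, bxy u a b x -> Q a x.

Lemma dominates_refl a : dominates a a.
Proof. by move=> x /(bxy_refl_eq Hu) ->. Qed.

Lemma dominates_trans {a b c} : dominates a b -> dominates b c -> dominates a c.
Proof.
move=> hab hbc x /(bxy_split Hu b) [hx | hx]; first exact: hab.
exact: Q_trans (hab _ (bxy_r a b)) (hbc _ hx).
Qed.

(* A chain [A] is bounded by a point of the intersection of the nest of balls
   [bigcup_(w in A, dominates s w) B(s, w)], [s in A]. *)
Lemma chain_dominated (A : Y -> Prop) : total_on A dominates ->
  exists y, forall s, A s -> dominates s y.
Proof.
move=> Atot.
pose Bs s z := exists2 w, A w /\ dominates s w & bxy u s w z.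
have Bs_ball s : A s -> is_ball u (Bs s).
  by move=> As; apply: (is_ball_bigcup_bxy Hu); exists s; split => //; exact: dominates_refl.
have Bs_mem s w : A w -> dominates s w -> Bs s w.
  by move=> Aw hsw; exists w => //; exact: bxy_r.
have [y hy] : exists y, forall B, (exists2 s, A s & B = Bs s) -> B y.
  apply: Hsc => [_ [s As ->] | _ _ [s1 As1 ->] [s2 As2 ->]]; first exact: Bs_ball.
  have [h12 | h21] := Atot s1 s2 As1 As2.
  - apply: (balls_meet_comparable Hu (Bs_ball _ As1) (Bs_ball _ As2) (p := s2)).
      exact: Bs_mem.
    by apply: Bs_mem => //; exact: dominates_refl.
  - apply: (balls_meet_comparable Hu (Bs_ball _ As1) (Bs_ball _ As2) (p := s1)).
      by apply: Bs_mem => //; exact: dominates_refl.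
    exact: Bs_mem.
exists y => s As x hx.
have [w [_ hsw] hy_sw] := hy (Bs s) (ex_intro2 _ _ s As erefl).
exact/hsw/(le_trans hy_sw hx).
Qed.

Lemma exists_premaximal_dominating y0 :
  exists2 t, dominates y0 t & forall z, dominates t z -> dominates z t.
Proof.
pose T := {y | dominates y0 y}.
pose R (a b : T) := `[< dominates (sval a) (sval b) >].
have RP a b : R a b <-> dominates (sval a) (sval b) by split => /asboolP.
have [|||[t y0t] tmax] := @ZL_preorder T (exist _ y0 (dominates_refl y0)) R.
- by move=> a; apply/RP; exact: dominates_refl.
- by move=> a b c /RP hab /RP hbc; apply/RP; exact: dominates_trans hab hbc.
- move=> A Atot.
  (* [y0] is added so that the bound also dominates [y0], even for an empty chain. *)
  pose A' y := y = y0 \/ exists2 t, A t & sval t = y.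
  have [|y hy] := chain_dominated A'.
    move=> _ _ [-> | [a Aa <-]] [-> | [b Ab <-]].
    - by left; exact: dominates_refl.
    - by left; exact: svalP.
    - by right; exact: svalP.
    - by have [/RP | /RP] := Atot a b Aa Ab; [left | right].
  exists (exist _ y (hy y0 (or_introl erefl))) => a Aa.
  by apply/RP/hy; right; exists a.
exists t => // z tz.
have Rtz : R (exist _ t y0t) (exist _ z (dominates_trans y0t tz)) by apply/RP.
by have /RP := tmax _ Rtz.
Qed.

Lemma exists_good_dominating (good : Y -> Prop) :
  (forall y, ~ good y -> exists2 z, ~ Q z y & dominates y z) ->
  forall y0, exists2 y, good y & dominates y0 y.
Proof.
move=> improve y0; have [t y0t tmax] := exists_premaximal_dominating y0.
exists t => //; apply: contrapT => /improve [z NQzt tz].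
exact/NQzt/(tmax z tz)/bxy_r.
Qed.

End Dominance.

Section ImmediateMaps.
Context {d : Order.disp_t} {G : orderType d} {inf : G}.
Context {d' : Order.disp_t} {G' : orderType d'} {inf' : G'}.
Context {Y Y' : Type} {u : Y -> Y -> G} {u' : Y' -> Y' -> G'} {f : Y -> Y'}.
Hypotheses (Hu : ultrametric inf u) (Hu' : ultrametric inf' u').
Hypotheses (Himm : immediate u u' f) (Hsc : spherically_complete u).

Lemma immediate_preimage_approach y0 z' :
  exists2 y, f y = z' & forall x, bxy u y0 y x -> u' (f y0) z' <= u' (f x) z'.
Proof.
apply: (exists_good_dominating Hu Hsc (fun a b => u' (f a) z' <= u' (f b) z'))
  => [a | a b c | y fy_neq]; [exact: lexx | exact: le_trans |].
have [z [fz_closer fBsub]] := Himm z' y (fun e => fy_neq (esym e)).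
exists z => [|x /fBsub hx]; first by apply/negP; rewrite -ltNge.
by apply: (um_triangle Hu' (f y)) (lexx _); rewrite (um_sym Hu' (f x)).
Qed.

Lemma immediate_surjective : inhabited Y -> forall y', exists y, f y = y'.
Proof. by move=> [y0] y'; have [y fy _] := immediate_preimage_approach y0 y'; exists y. Qed.

Lemma immediate_spherically_complete : inhabited Y -> spherically_complete u'.
Proof.
move=> [y0] N' N'ball N'nest.
pose Q a b := forall B', N' B' -> B' (f a) -> B' (f b).
have [a b|a b c|y y_bad|y y_good _] :=
  exists_good_dominating Hu Hsc Q _ _ (fun a => forall B', N' B' -> B' (f a)) _ y0.
- by [].
- by move=> Qab Qbc B' NB' /Qab /Qbc; apply.
- have [B0 /not_implyP [N'B0 B0_fy]] := (existsNP _).2 y_bad.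
  have [x' B0x'] := ball_inhabited (N'ball _ N'B0).
  have [w fw w_approach] := immediate_preimage_approach y x'.
  exists w => [Qwy | x /w_approach hx B' N'B' B'fy].
    by apply/B0_fy/(Qwy _ N'B0); rewrite fw.
  have [B'B0 | B0B'] := N'nest B' B0 N'B' N'B0; first by exfalso; exact/B0_fy/B'B0.
  exact: (ball_mem_closer Hu' (N'ball _ N'B') B'fy (B0B' _ B0x') hx).
- by exists (f y).
Qed.

Lemma immediate_ball_image y B' : is_ball u' B' -> B' (f y) ->
  exists B, [/\ is_ball u B, B y & forall z', B' z' <-> exists z, B z /\ f z = z'].
Proof.
move=> hB' B'fy.
pose P w := forall v, bxy u y w v -> B' (f v).
have Py : P y by move=> v /(bxy_refl_eq Hu) ->.
exists (fun z => exists2 w, P w & bxy u y w z); split.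
- by apply: (is_ball_bigcup_bxy Hu); exists y.
- by exists y; last exact: bxy_r.
- move=> z'; split => [B'z' | [z [[w Pw hz] <-]]]; last exact: Pw.
  have [w fw w_approach] := immediate_preimage_approach y z'.
  exists w; split => //; exists w; last exact: bxy_r.
  by move=> v /w_approach; exact: (ball_mem_closer Hu' hB' B'fy B'z').
Qed.

End ImmediateMaps.

Theorem theorem2 (d : Order.disp_t) (G : orderType d) (inf : G)
  (d' : Order.disp_t) (G' : orderType d') (inf' : G')
  (Y Y' : Type) (u : Y -> Y -> G) (u' : Y' -> Y' -> G') (f : Y -> Y') :
  ultrametric inf u -> ultrametric inf' u' ->
  inhabited Y -> inhabited Y' ->
  immediate u u' f ->
  spherically_complete u ->
  [/\ (forall y' : Y', exists y : Y, f y = y'),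
      spherically_complete u'
    & (forall (y : Y) (B' : Y' -> Prop), is_ball u' B' -> B' (f y) ->
         exists B : Y -> Prop, [/\ is_ball u B, B y &
           forall z', B' z' <-> exists z, B z /\ f z = z'])].
Proof.
move=> Hu Hu' Yne _ Himm Hsc; split.
- exact: immediate_surjective Hu Hu' Himm Hsc Yne.
- exact: immediate_spherically_complete Hu Hu' Himm Hsc Yne.
- exact: immediate_ball_image Hu Hu' Himm Hsc.
Qed.
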